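(* Let $k$ be a positive integer such that $k+1$ is an odd prime, and let $p>k(k+1)$ be an odd prime. Then every $\mathbf u\in\pi_{(k+1)p\to p}^{-1}\big((1,2,\ldots,k)\big)\subseteq\mathbb{Z}_{p,k+1}^k$ is $(k,p,k+1)$-proper. In particular, $(1,2,\ldots,k)\in\mathbb{Z}_{p,1}^k$ is eventually $(k,p)$-proper.
   Context: For $x\in\mathbb{R}$, $\lVert x\rVert$ is the distance from $x$ to the nearest integer. $\mathbb{Z}_n$ denotes integers modulo $n$; $\mathbb{Z}_{p,l}:=\mathbb{Z}_{pl}\setminus p\mathbb{Z}_l$ (residues mod $pl$ not divisible by $p$); $\pi_{m\to n}$ is the natural projection $\mathbb{Z}_m\to\mathbb{Z}_n$ for $n\mid m$, coordinatewise on tuples. A tuple $\mathbf v\in\mathbb{Z}_{p,l}^k$ is $(k,p,l)$-proper if either there is an index $i$ with $\gcd(l,v_1,\ldots,v_{i-1},v_{i+1},\ldots,v_k)>1$, or there is $t\in\frac1{lp}\mathbb{Z}$ with $\lVert tv_j\rVert\ge\frac1{k+1}$ for all $j$; otherwise it is $(k,p,l)$-improper, and $I(k,p,l)$ is the set of improper tuples. $\mathbf v\in\mathbb{Z}_{p,1}^k$ is eventually $(k,p)$-proper if $\mathbf v\notin\pi_{lp\to p}I(k,p,l)$ for some positive integer $l$. *)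

From mathcomp Require Import all_boot all_order all_algebra.
Unset Printing Implicit Defensive.
Import Order.TTheory GRing.Theory Num.Theory.
Local Open Scope ring_scope.

(* ||x||: distance from x to the nearest integer (x rational suffices,
   since t lies in (1/(lp))Z and the v_j are integers). *)
Definition dist_nint (x : rat) : rat :=
  Num.min (x - (Num.floor x)%:~R) ((Num.floor x + 1)%:~R - x).

(* Residues mod p*l represented by their least nonnegative representative. *)
Definition in_Zpl (p l x : nat) : bool := ((x < p * l) && ~~ (p %| x))%N.

(* v : 'I_k -> nat (coordinate j corresponds to index j+1) lies in Z_{p,l}^k *)
Definition tuple_in_Zpl (k p l : nat) (v : 'I_k -> nat) : Prop :=
  forall j : 'I_k, in_Zpl p l (v j).

Definition kpl_proper (k p l : nat) (v : 'I_k -> nat) : Prop :=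
  (exists i : 'I_k, (1 < gcdn l (\big[gcdn/0%N]_(j < k | j != i) v j))%N)
  \/
  (exists a : int, forall j : 'I_k,
      1 / (k.+1)%:R <= dist_nint ((a%:~R / (l * p)%:R) * (v j)%:R)).

Definition improper (k p l : nat) (v : 'I_k -> nat) : Prop := ~ kpl_proper k p l v.

Definition proj_mod (k p : nat) (v : 'I_k -> nat) : 'I_k -> nat :=
  fun j => (v j %% p)%N.

Definition eventually_proper (k p : nat) (w : 'I_k -> nat) : Prop :=
  exists l : nat, (0 < l)%N /\
    ~ (exists v : 'I_k -> nat,
         tuple_in_Zpl k p l v /\ improper k p l v /\ proj_mod k p v = w).

From mathcomp Require Import all_boot all_order all_algebra.
From mathcomp Require Import zify ring lra.
Import Order.TTheory GRing.Theory Num.Theory.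

(* If no coordinate of u is divisible by q = k+1, the witness t = 1/q works.
   If all but one are, the gcd clause applies.  Otherwise we look for
   t = (s p + c)/(q p) with s, c < q: writing u_j = b_j p + (j+1),
   t u_j = (s u_j + c b_j)/q + c (j+1)/(q p) mod 1, and since c (j+1) < p it
   suffices that s u_j + c b_j avoids 0 and -1 mod q for every j.  Such (s, c)
   exist by a polynomial count over F_q: if every pair failed, then each
   mu with Phi mu := prod_j (u_j mu + b_j) <> 0 would make j |-> u_j mu + b_j
   a bijection onto F_q^*, so Phi mu would equal the product of all units;
   but Phi has degree at most q - 2 (one u_j vanishes mod q), so its values
   sum to 0, and the number of mu with Phi mu <> 0, which lies strictly
   between 0 and q, would be divisible by q. *)

Set Implicit Arguments.
Unset Strict Implicit.

Local Open Scope ring_scope.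

Lemma exists_nonroot (R : finIdomainType) (P : {poly R}) :
  P != 0 -> (size P <= #|R|)%N -> exists x, ~~ root P x.
Proof.
move=> P_neq0 sizeP; apply/existsP; apply: contraTT sizeP.
rewrite negb_exists => /forallP /= allroot; rewrite -ltnNge cardE.
by apply: max_poly_roots => //; [apply/allP => x _; exact/negPn/allroot | exact: enum_uniq].
Qed.

Section PrimeField.

Variable q : nat.
Hypothesis q_pr : prime q.
Local Notation F := 'F_q.

Lemma sum_Fp_expr j : (j < q.-1)%N -> \sum_(x : F) x ^+ j = 0.
Proof.
case: j => [|j] j_lt.
  by under eq_bigr do rewrite expr0; rewrite sumr_const card_Fp // pchar_Fp_0.
have [a a_neq0 aj_neq1] : exists2 a : F, a != 0 & a ^+ j.+1 != 1.
  apply/exists_inP; apply: contraTT j_lt; rewrite negb_exists_in => /forall_inP.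
  move=> /= unity; rewrite -leqNgt.
  have Xn1_neq0 : ('X^(j.+1) - 1 : {poly F}) != 0.
    by rewrite -size_poly_eq0 size_XnsubC.
  have := max_poly_roots Xn1_neq0 _ (enum_uniq (predC1 (0 : F))).
  rewrite -cardE cardC1 card_Fp // size_XnsubC // ltnS; apply.
  by apply/allP => x; rewrite mem_enum => /unity; rewrite negbK /root !hornerE subr_eq0.
have sum_scaled : \sum_(x : F) x ^+ j.+1 = a ^+ j.+1 * \sum_(x : F) x ^+ j.+1.
  rewrite {1}(reindex_inj (mulfI a_neq0)) /= mulr_sumr.
  by apply: eq_bigr => x _; rewrite exprMn.
have : (a ^+ j.+1 - 1) * \sum_(x : F) x ^+ j.+1 = 0.
  by rewrite mulrBl mul1r -sum_scaled subrr.
by move/eqP; rewrite mulf_eq0 subr_eq0 (negbTE aj_neq1) => /eqP.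
Qed.

Lemma sum_Fp_horner (P : {poly F}) : (size P <= q.-1)%N -> \sum_(x : F) P.[x] = 0.
Proof.
move=> sizeP; under eq_bigr do rewrite (horner_coef_wide _ sizeP).
rewrite exchange_big /=; apply: big1 => i _.
by rewrite -mulr_sumr sum_Fp_expr ?mulr0.
Qed.

Section LinearForms.

Variables (I : finType) (A B : I -> F).
Hypothesis card_I : #|I| = q.-1.

Definition linear_forms_poly : {poly F} := \prod_j (A j *: 'X + (B j)%:P).
Local Notation Phi := linear_forms_poly.

Lemma horner_linear_forms_poly mu : Phi.[mu] = \prod_j (A j * mu + B j).
Proof. by rewrite horner_prod; apply: eq_bigr => j _; rewrite !hornerE. Qed.

Lemma size_linear_forms_poly j0 : A j0 = 0 -> (size Phi <= q.-1)%N.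
Proof.
move=> Aj0; have q_gt1 := prime_gt1 q_pr.
have size_factor j : (size (A j *: 'X + (B j)%:P)%R <= (A j != 0%R).+1)%N.
  have [->|_] /= := eqVneq (A j) 0; first by rewrite scale0r add0r size_polyC_leq1.
  apply: leq_trans (size_polyD _ _) _.
  rewrite geq_max (leq_trans (size_polyC_leq1 _)) // andbT.
  by rewrite (leq_trans (size_scale_leq _ _)) ?size_polyX.
have sum_sizes : (\sum_j size (A j *: 'X + (B j)%:P)%R <= 1 + (q.-1).-1 * 2)%N.
  rewrite (bigD1 j0) //= -card_I -(cardC1 j0) -sum_nat_const.
  apply: leq_add; first by apply: leq_trans (size_factor j0) _; rewrite Aj0 eqxx.
  by apply: leq_sum => j _; apply: leq_trans (size_factor j) _; rewrite ltnS leq_b1.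
apply: leq_trans (size_poly_prod_leq _ _) _.
by move: sum_sizes; rewrite [#|_|]card_I; move: (\sum_j _)%N => S; lia.
Qed.

Lemma linear_forms_poly_neq0 : (forall j, A j = 0 -> B j != 0) -> Phi != 0.
Proof.
move=> AB; rewrite prodf_seq_neq0; apply/allP => j _ /=; apply/eqP => factor0.
have := congr1 (coefp 1) factor0; have := congr1 (coefp 0) factor0.
rewrite /= !(coefD, coefZ, coefX, coefC, coef0) /= mulr0 mulr1 add0r addr0.
by move=> Bj Aj; move: (AB j Aj); rewrite Bj eqxx.
Qed.

Lemma root_linear_forms_poly j : A j != 0 -> root Phi (- B j / A j).
Proof.
move=> Aj; rewrite /root horner_linear_forms_poly; apply/prodf_eq0.
by exists j => //; rewrite mulrCA mulfV // mulr1 addNr.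
Qed.

Hypothesis every_pair_hits :
  forall s c : F, exists j, s * A j + c * B j \in [:: 0; -1].

Lemma linear_forms_poly_value mu :
  Phi.[mu] != 0 -> Phi.[mu] = \prod_(x : F | x != 0) x.
Proof.
rewrite horner_linear_forms_poly => Phi_mu; pose v j := A j * mu + B j.
have v_neq0 j : v j != 0.
  by apply: contra Phi_mu => vj0; apply/prodf_eq0; exists j.
(* the pair (-mu/y, -1/y) takes the value -(v j)/y at j *)
have v_onto : [set v j | j in setT] = [set~ 0].
  apply/setP => y; rewrite in_setC1; apply/imsetP/idP => [[j _ ->] // | y_neq0].
  have [j hit] := every_pair_hits (- mu / y) (- 1 / y); exists j; first by rewrite inE.
  have vj_y : - mu / y * A j + - 1 / y * B j = - (v j / y) by rewrite /v; ring.
  move: hit; rewrite vj_y.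
  rewrite !inE oppr_eq0 mulf_eq0 invr_eq0 (negbTE y_neq0) (negbTE (v_neq0 j)).
  by rewrite /= eqr_opp => /eqP /divr1_eq ->.
have v_inj : {in setT &, injective v}.
  by apply/imset_injP; rewrite v_onto cardsT cardsC1 card_Fp // card_I.
rewrite (eq_bigl (mem [set v j | j in setT])); last by move=> x; rewrite v_onto !inE.
by rewrite big_imset //=; apply: eq_bigl => j; rewrite in_setT.
Qed.

End LinearForms.

Lemma exists_linear_form_avoiding_0_m1 (I : finType) (A B : I -> F) j0 j1 :
  #|I| = q.-1 -> A j0 = 0 -> A j1 != 0 -> (forall j, A j = 0 -> B j != 0) ->
  exists s c : F, forall j, s * A j + c * B j \notin [:: 0; -1].
Proof.
move=> card_I Aj0 Aj1 AB.
have [[s c] /forallP ok | none] :=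
  pickP (fun sc : F * F => [forall j, sc.1 * A j + sc.2 * B j \notin [:: 0; -1]]).
  by exists s, c.
have hits s c : exists j, s * A j + c * B j \in [:: 0; -1].
  by have /negbT/forallPn[j] := none (s, c); rewrite negbK; exists j.
pose Phi := linear_forms_poly A B; pose K := \prod_(x : F | x != 0) x.
pose m := #|[pred mu : F | Phi.[mu] != 0]|.
have K_neq0 : K != 0 by rewrite prodf_seq_neq0; apply/allP => x _; apply/implyP.
have sum_Phi : \sum_(mu : F) Phi.[mu] = K *+ m.
  rewrite (bigID (fun mu => Phi.[mu] != 0)) /= [X in _ + X]big1 => [|mu /negPn/eqP //].
  rewrite addr0 (eq_bigr (fun _ => K)) ?sumr_const // => mu.
  exact: linear_forms_poly_value card_I hits mu.
have sizePhi := size_linear_forms_poly B card_I Aj0.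
have m_gt0 : (0 < m)%N.
  have [|mu] := @exists_nonroot _ Phi (linear_forms_poly_neq0 AB).
    by rewrite card_Fp //; apply: leq_trans sizePhi (leq_pred _).
  by move=> mu_nonroot; apply/card_gt0P; exists mu.
have m_lt_q : (m < q)%N.
  rewrite -(card_Fp q_pr) -(cardC [pred mu : F | Phi.[mu] != 0]) -/m -addn1 leq_add2l.
  apply/card_gt0P; exists (- B j1 / A j1); rewrite !inE negbK.
  exact: root_linear_forms_poly.
have : (m%:R : F) * K = 0 by rewrite mulr_natl -sum_Phi sum_Fp_horner.
move/eqP; rewrite mulf_eq0 (negbTE K_neq0) orbF -(dvdn_pcharf (pchar_Fp q_pr)).
by move/(dvdn_leq m_gt0); rewrite leqNgt m_lt_q.
Qed.

End PrimeField.

Lemma dist_nint_intrD (z : int) (r : rat) :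
  0 <= r -> r < 1 -> dist_nint (z%:~R + r) = Num.min r (1 - r).
Proof.
move=> r_ge0 r_lt1; rewrite /dist_nint (@floor_def _ _ z); last first.
  by rewrite intrD; apply/andP; split; lra.
by rewrite intrD; congr Num.min; ring.
Qed.

Lemma ler_inv_natr_div (a b c : nat) :
  (0 < b)%N -> (b <= c * a)%N -> c%:R^-1 <= (a%:R / b%:R : rat).
Proof.
move=> b_gt0 b_le; have c_gt0 : (0 < c)%N by move: b_le; case: c; lia.
by rewrite -div1r ler_pdivlMr ?ltr0n // mul1r ler_pdivrMl ?ltr0n // -natrM ler_nat.
Qed.

Lemma dist_nint_natr_ge (a u d c : nat) (r := (a * u %% d)%N) :
  (0 < d)%N -> (d <= c * r)%N -> (d <= c * (d - r))%N ->
  1 / c%:R <= dist_nint ((a%:Z)%:~R / d%:R * u%:R).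
Proof.
move=> d_gt0 r_ge r_le; have r_lt : (r < d)%N by rewrite ltn_pmod.
have d_neq0 : (d%:R : rat) != 0 by rewrite pnatr_eq0 -lt0n.
have -> : (a%:Z)%:~R / d%:R * u%:R = ((a * u %/ d)%:Z)%:~R + r%:R / d%:R :> rat.
  change ((a%:Z)%:~R) with (a%:R : rat).
  change (((a * u %/ d)%:Z)%:~R) with ((a * u %/ d)%:R : rat).
  rewrite mulrAC -natrM {1}(divn_eq (a * u) d) natrD natrM mulrDl mulfK //.
rewrite dist_nint_intrD ?divr_ge0 ?ltr_pdivrMr ?ltr0n ?mul1r ?ltr_nat // le_min.
apply/andP; split; first exact: (ler_inv_natr_div d_gt0 r_ge).
have -> : 1 - r%:R / d%:R = (d - r)%:R / d%:R :> rat.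
  by rewrite natrB ?(ltnW r_lt) // mulrBl divff.
exact: (ler_inv_natr_div d_gt0 r_le).
Qed.

(* With u = b p + r and M = s u + c b, (s p + c) u = p M + c r, so modulo q p
   the product is p (M mod q) + c r, which stays away from 0 and q p. *)
Lemma dist_nint_shifted_ge (q p s c u : nat) (M := (s * u + c * (u %/ p))%N) :
  (0 < q)%N -> (0 < p)%N -> ~~ (q %| M)%N -> ~~ (q %| M.+1)%N ->
  (c * (u %% p) < p)%N ->
  1 / q%:R <= dist_nint (((s * p + c)%:Z)%:~R / (q * p)%:R * u%:R).
Proof.
move=> q_gt0 p_gt0 qM qM1 cr_lt; set m := (M %% q)%N; set r := (u %% p)%N.
have m_gt0 : (0 < m)%N by rewrite lt0n.
have m_lt : (m.+1 < q)%N.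
  rewrite ltn_neqAle ltn_mod q_gt0 andbT; apply: contra qM1 => /eqP m1q.
  by rewrite /dvdn -addn1 -modnDml -/m addn1 m1q modnn.
have x_bound : (p * m + c * r + p <= q * p)%N.
  have : (p * m.+2 <= q * p)%N by rewrite mulnC leq_pmul2r.
  by rewrite !mulnS; lia.
have prod_mod : ((s * p + c) * u %% (q * p) = p * m + c * r)%N.
  have -> : ((s * p + c) * u = M %/ q * (q * p) + (p * m + c * r))%N.
    have -> : ((s * p + c) * u = p * M + c * r)%N.
      by rewrite /M /r {1 2}(divn_eq u p); ring.
    by rewrite {1}(divn_eq M q) -/m; ring.
  by rewrite modnMDl modn_small //; clearbody m r M; lia.
apply: dist_nint_natr_ge; rewrite ?muln_gt0 ?q_gt0 // prod_mod leq_pmul2l //.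
  exact: leq_trans (leq_pmulr p m_gt0) (leq_addr _ _).
by rewrite leq_subRL // (leq_trans (leq_addr p _) x_bound).
Qed.

Lemma kpl_proper_gcd k p l (v : 'I_k -> nat) (i : 'I_k) :
  (1 < l)%N -> (forall j, j != i -> (l %| v j)%N) -> kpl_proper k p l v.
Proof.
move=> l_gt1 dvd_v; left; exists i.
have /gcdn_idPl -> : (l %| \big[gcdn/0]_(j < k | j != i) v j)%N.
  exact/dvdn_biggcdP.
exact: l_gt1.
Qed.

Lemma kpl_proper_indivisible k p l (v : 'I_k -> nat) :
  (0 < p)%N -> (0 < l <= k.+1)%N -> (forall j, ~~ (l %| v j)%N) ->
  kpl_proper k p l v.
Proof.
move=> p_gt0 /andP[l_gt0 l_le] ndvd_v; right; exists (Posz p) => j.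
have r_gt0 : (0 < v j %% l)%N by rewrite lt0n; exact: ndvd_v.
have r_lt : (v j %% l < l)%N by rewrite ltn_mod.
apply: dist_nint_natr_ge; rewrite ?muln_gt0 ?l_gt0 //.
all: rewrite [(l * p)%N]mulnC -muln_modr.
  rewrite mulnCA leq_pmul2l //; exact: leq_trans l_le (leq_pmulr _ r_gt0).
rewrite -mulnBr mulnCA leq_pmul2l //.
by apply: leq_trans l_le (leq_pmulr _ _); rewrite subn_gt0.
Qed.

Lemma kpl_proper_mixed k p (u : 'I_k -> nat) j0 j1 :
  prime k.+1 -> (k * k.+1 < p)%N -> (forall j, u j %% p = j.+1)%N ->
  (k.+1 %| u j0)%N -> ~~ (k.+1 %| u j1)%N -> kpl_proper k p k.+1 u.
Proof.
move=> q_pr kp_lt u_mod dvd_j0 ndvd_j1.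
have p_gt0 : (0 < p)%N := leq_ltn_trans (leq0n _) kp_lt.
have pchar := pchar_Fp q_pr.
pose A j : 'F_k.+1 := (u j)%:R; pose B j : 'F_k.+1 := (u j %/ p)%:R.
have A_eq0 j : (A j == 0) = (k.+1 %| u j)%N by rewrite (dvdn_pcharf pchar).
have AB j : A j = 0 -> B j != 0.
  move/eqP; rewrite A_eq0 {1}(divn_eq (u j) p) u_mod => dvd_j.
  apply: contraTneq dvd_j => /eqP; rewrite -(dvdn_pcharf pchar) => dvd_b.
  by rewrite dvdn_addr ?(dvdn_mulr _ dvd_b) // gtnNdvd // ltnS ltn_ord.
have Aj0 : A j0 = 0 by apply/eqP; rewrite A_eq0.
have Aj1 : A j1 != 0 by rewrite A_eq0.
have [s [c avoid]] := exists_linear_form_avoiding_0_m1 q_pr (card_ord k) Aj0 Aj1 AB.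
have c_lt : (c < k.+1)%N by rewrite -[in X in (_ < X)%N](Fp_cast q_pr) ltn_ord.
right; exists (Posz (s * p + c)) => j.
have M_eq : ((s * u j + c * (u j %/ p))%:R : 'F_k.+1) = s * A j + c * B j.
  by rewrite natrD !natrM !natr_Zp.
move: (avoid j); rewrite !inE negb_or => /andP[M_neq0 M_neqN1].
apply: dist_nint_shifted_ge => //.
- by rewrite (dvdn_pcharf pchar) M_eq.
- by rewrite (dvdn_pcharf pchar) mulrSr M_eq addr_eq0.
- rewrite u_mod; apply: leq_ltn_trans kp_lt.
  by apply: leq_mul; [rewrite -ltnS | exact: leqW (ltn_ord j)].
Qed.

Theorem proposition4p4 (k p : nat) :
  (0 < k)%N -> prime k.+1 -> odd k.+1 ->
  prime p -> odd p -> (k * k.+1 < p)%N ->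
  (forall u : 'I_k -> nat,
     tuple_in_Zpl k p k.+1 u ->
     (forall j : 'I_k, (u j %% p)%N = j.+1) ->
     kpl_proper k p k.+1 u)
  /\ eventually_proper k p (fun j : 'I_k => j.+1).
Proof.
move=> _ q_pr _ p_pr _ kp_lt.
have proper_u (u : 'I_k -> nat) : (forall j, u j %% p = j.+1)%N -> kpl_proper k p k.+1 u.
  move=> u_mod; have [j0 dvd_j0 | ndvd] := pickP (fun j => k.+1 %| u j)%N.
    have [j1 ndvd_j1 | dvd] := pickP (fun j => ~~ (k.+1 %| u j))%N.
      exact: kpl_proper_mixed u_mod dvd_j0 ndvd_j1.
    by apply: (kpl_proper_gcd p (i := j0) (prime_gt1 q_pr)) => j _; apply/negbFE/dvd.
  by apply: kpl_proper_indivisible; rewrite ?prime_gt0 ?ltnSn // => j; rewrite ndvd.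
split=> [u _ |]; first exact: proper_u.
exists k.+1; split=> // -[v [_ [improper_v proj_v]]].
by apply: improper_v (proper_u v _) => j; exact: (congr1 (fun f => f j) proj_v).
Qed.
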